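(* Let $\rho\in V_0$ be non-integral. Let $\mathcal A\subseteq\mathrm{End}_{\mathbb C}\,\mathcal C(\rho+\Lambda_+)$ be the algebra generated by the multiplication operators $m_h$ ($h\in\mathcal P^W$) and $L$. For $X\in\mathrm{End}_{\mathbb C}\,\mathcal C(\rho+\Lambda_+)$ define $\widehat X$ by $\widehat X(h):=\widehat{X(\widehat h)}$. Then $X\mapsto\widehat X$ restricts to an involutory automorphism of $\mathcal A$; more precisely $\widehat{m_h}=D_h$ for all $h\in\mathcal P^W$ and $\widehat L=-L$.
   Context: Setting: $V$ is a finite-dimensional complex vector space, $W\subseteq GL(V)$ a finite reflection group, $\Lambda_+\subseteq V$ a finitely generated submonoid whose minimal set of generators $\Sigma^\vee$ is a basis of $V$, and $\ell:V\to\mathbb C$ a $W$-invariant linear form with $\ell(\Lambda_+)\subseteq\mathbb N$; these data satisfy the axioms of F. Knop, ''Construction of commuting difference operators for multiplicity free spaces'' (the combinatorial data attached to multiplicity free representations). Notation: $\Gamma^\vee=\mathbb Z\Lambda_+$, $\Gamma\subseteq V^\vee$ its dual lattice, $\Sigma\subseteq V^\vee$ the dual basis of $\Sigma^\vee$, $\Phi=\bigcup_{w\in W}w\Sigma$, $\Delta\subseteq\Gamma$ the root system of $W$ with roots primitive in $\Gamma$, $\Delta^+=\{\alpha\in\Delta:\alpha(\Sigma^\vee)\ge0\}$, $\Lambda_1=\{w\eta:w\in W,\eta\in\Sigma^\vee,\ell(\eta)=1\}$. $V_0$ is the set of $\rho\in V$ with $\omega_1(\rho)=\omega_2(\rho)$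 whenever $\omega_1,\omega_2\in\Sigma$, $\omega_1\in\pm W\omega_2$; for $\rho\in V_0$, $\omega\in\pm\Phi$, $k_\omega:=\omega_1(\rho)$ with $\omega_1\in(\pm W\omega)\cap\Sigma$. $\rho\in V_0$ is non-integral if $\alpha(\rho)\notin\mathbb Z$ for all $\alpha\in\Delta^+$. $\mathcal P$ = polynomial functions on $V$. Known: for such $\rho$ and $\lambda\in\Lambda_+$ there is a unique $p_\lambda\in\mathcal P^W$ with $\deg p_\lambda\le\ell(\lambda)$ and $p_\lambda(\rho+\mu)=\delta_{\lambda\mu}$ for all $\mu\in\Lambda_+$ with $\ell(\mu)\le\ell(\lambda)$; they form a basis of $\mathcal P^W$. $\mathcal C(\rho+\Lambda_+)$ is the space of complex functions on $\rho+\Lambda_+$ ($\mathcal P^W$ embeds by restriction), and for $h\in\mathcal C(\rho+\Lambda_+)$, $\widehat h(\rho+\mu):=\sum_{\tau\in\Lambda_+}(-1)^{\ell(\tau)}p_\tau(\rho+\mu)h(\rho+\tau)$ (finite sum). Difference operators: $[z\downarrow d]=z(z-1)\cdots(z-d+1)$ for $d>0$, $=1$ otherwise; for $\tau\in\Gamma^\vee$, $f_\tau(z)=\prod_{\omega\in\Phi}[\omega(z)-k_\omega\downarrow\omega(\tau)]\big/\prod_{\alpha\in\Delta}[\alpha(z)\downarrow\alpha(\tau)]$; $L$ acts on $\mathcal C(\rho+\Lambda_+)$ by $(Lh)(\rho+\lambda)=\sum_{\eta\in\Lambda_1}f_\eta(\rho+\lambda)h(\rho+\lambda-\eta)$, which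 is well defined since (known) $f_\eta(\rho+\lambda)=0$ whenever $\lambda\in\Lambda_+$, $\lambda-\eta\notin\Lambda_+$; on polynomials this is $L=\sum_{\eta\in\Lambda_1}f_\eta(z)T_\eta$ with $(T_\eta f)(z)=f(z-\eta)$. Known: $(\mathrm{ad}L)^n(m_h)=0$ for $n>\deg h$, and $D_h:=\sum_{n\ge0}\frac1{n!}(\mathrm{ad}L)^n(m_h)\in\mathcal A$ satisfies $D_h(p_\lambda)=h(\rho+\lambda)p_\lambda$. *)

From HB Require Import structures.
From mathcomp Require Import all_boot all_order all_algebra.
From mathcomp Require Import mpoly.
Set Implicit Arguments.
Unset Strict Implicit.
Unset Printing Implicit Defensive.
Import Order.TTheory GRing.Theory Num.Theory.
Local Open Scope ring_scope.

(* Coordinates: V = C^n with the basis Sigma^vee = standard basis (row vectors).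
   Lambda_+ = N^n, Gamma^vee = Z^n, Sigma = coordinate forms, Gamma = Z^n.
   Points of V are rows; W acts on V on the right: z |-> z *m w.
   Linear forms on V are columns a, a(z) = z *m a; W acts on forms by
   w . a = w^{-1} *m a, so W-orbits of forms are { w *m a | w in W }. *)

Definition Lam (n : nat) := {ffun 'I_n -> nat}.

Section Setting.
Variable C : numClosedFieldType.
Variable n : nat.
Variable ws : seq 'M[int]_n.
Variable l : 'I_n -> nat.           (* ell(eta_i) for the basis Sigma^vee *)
Variable Delta : seq 'cV[int]_n.
Variable rho : 'I_n -> C.           (* coordinates of rho in the basis Sigma^vee *)
Variable p : Lam n -> {mpoly C[n]}.

Definition ecol (i : 'I_n) : 'cV[int]_n := delta_mx i 0.
Definition lcol : 'cV[int]_n := \col_i (l i)%:Z.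

Definition is_reflection (s : 'M[int]_n) : Prop :=
  s *m s = 1%:M /\ \rank (map_mx (fun x : int => (x%:~R : C)) (s - 1%:M)) = 1%N.

Definition finite_reflection_group : Prop :=
  [/\ uniq ws, (1%:M \in ws),
      {in ws &, forall w1 w2, w1 *m w2 \in ws},
      {in ws, forall w, exists2 w', w' \in ws & w *m w' = 1%:M} &
      {in ws, forall w, exists rs : seq 'M[int]_n,
          (forall r, r \in rs -> r \in ws /\ is_reflection r) /\
          w = foldr mulmx 1%:M rs}].

Definition ell_invariant : Prop := forall w, w \in ws -> w *m lcol = lcol.

Definition primitive (a : 'cV[int]_n) : bool :=
  (\big[gcdn/0%N]_i absz (a i ord0) == 1%N).

Definition Delta_spec : Prop :=
  uniq Delta /\
  forall a : 'cV[int]_n, a \in Delta <->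
    (primitive a /\ exists2 s, s \in ws & is_reflection s /\ s *m a = - a).

Definition Delta_plus : seq 'cV[int]_n := [seq a <- Delta | [forall i, (0 <= (a : 'cV[int]_n) i ord0)%R]].

Definition Phi : seq 'cV[int]_n := undup [seq col j w | w <- ws, j <- enum 'I_n].

Definition Lam1 : seq 'rV[int]_n :=
  undup [seq row i w | w <- ws, i <- [seq i <- enum 'I_n | l i == 1%N]].

Definition in_V0 : Prop :=
  forall i j : 'I_n, (exists2 w, w \in ws & (col j w == ecol i) || (col j w == - ecol i)) ->
    rho i = rho j.

Definition formC (a : 'cV[int]_n) (z : 'I_n -> C) : C := \sum_i (a i ord0)%:~R * z i.
Definition pair (t : 'rV[int]_n) (a : 'cV[int]_n) : int := \sum_i t ord0 i * a i ord0.

Definition nonintegral : Prop :=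
  forall a, a \in Delta_plus -> forall k : int, formC a rho != k%:~R.

(* k_omega := omega_1(rho), omega_1 in (+- W omega) cap Sigma *)
Definition kval (om : 'cV[int]_n) : C :=
  match [pick j : 'I_n | has (fun w => (w *m om == ecol j) || (w *m om == - ecol j)) ws] with
  | Some j => rho j
  | None => 0
  end.

Definition falling (x : C) (d : int) : C :=
  match d with Posz m => \prod_(i < m) (x - i%:R) | Negz _ => 1 end.

Definition f_tau (t : 'rV[int]_n) (z : 'I_n -> C) : C :=
  (\prod_(om <- Phi) falling (formC om z - kval om) (pair t om)) /
  (\prod_(a <- Delta) falling (formC a z) (pair t a)).

Definition ptC (la : Lam n) : 'I_n -> C := fun i => rho i + (la i)%:R.
Definition lev (la : Lam n) : nat := \sum_i la i * l i.

Definition fn := Lam n -> C.          (* C(rho + Lambda_+) *)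
Definition op := fn -> fn.

Definition W_invariant (q : {mpoly C[n]}) : Prop :=
  forall w, w \in ws -> forall z : 'I_n -> C,
    q.@[z] = q.@[fun j => \sum_i z i * (w i j)%:~R].

Definition shiftm (la : Lam n) (eta : 'rV[int]_n) : option (Lam n) :=
  if [forall i, 0 <= (la i)%:Z - eta ord0 i]
  then Some [ffun i => absz ((la i)%:Z - eta ord0 i)] else None.

Definition Lop : op := fun h la =>
  \sum_(eta <- Lam1) f_tau eta (ptC la) *
     (match shiftm la eta with Some mu => h mu | None => 0 end).

Definition mop (q : {mpoly C[n]}) : op := fun h la => q.@[ptC la] * h la.

Definition adL (X : op) : op := fun h la => Lop (X h) la - X (Lop h) la.

Definition Dop (q : {mpoly C[n]}) : op := fun h la =>
  \sum_(k < (msize q).+1) (k`!%:R)^-1 * iter k adL (mop q) h la.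

Definition pfun (la : Lam n) : fn := fun mu => (p la).@[ptC mu].

(* h^ (mu) = sum_tau (-1)^{ell tau} p_tau(rho+mu) h(rho+tau); only tau with
   ell(tau) <= ell(mu) contribute, and these have all coordinates <= ell(mu). *)
Definition hatf (h : fn) : fn := fun mu =>
  \sum_(t : {ffun 'I_n -> 'I_(lev mu).+1} |
          (lev [ffun i => nat_of_ord (t i)] <= lev mu)%N)
     (-1) ^+ lev [ffun i => nat_of_ord (t i)] *
     pfun [ffun i => nat_of_ord (t i)] mu * h [ffun i => nat_of_ord (t i)].

Definition hatop (X : op) : op := fun h => hatf (X (hatf h)).

Inductive inA : op -> Prop :=
| inA_m q : W_invariant q -> inA (mop q)
| inA_L : inA Lop
| inA_id : inA (fun h => h)
| inA_add X Y : inA X -> inA Y -> inA (fun h la => X h la + Y h la)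
| inA_scale (c : C) X : inA X -> inA (fun h la => c * X h la)
| inA_comp X Y : inA X -> inA Y -> inA (fun h => X (Y h)).

Definition knop_setting : Prop :=
  [/\ finite_reflection_group, ell_invariant, Delta_spec &
      (forall i, (0 < l i)%N)].

Definition interpolation_basis : Prop :=
  [/\ (forall la, W_invariant (p la) /\ (msize (p la) <= (lev la).+1)%N /\
          forall mu, (lev mu <= lev la)%N -> (p la).@[ptC mu] = (la == mu)%:R),
      (forall la q, W_invariant q -> (msize q <= (lev la).+1)%N ->
          (forall mu, (lev mu <= lev la)%N -> q.@[ptC mu] = (la == mu)%:R) -> q = p la),
      (forall q, W_invariant q -> exists (s : seq (Lam n)) (c : Lam n -> C),
          q = \sum_(la <- s) c la *: p la) &
      (forall (s : seq (Lam n)) (c : Lam n -> C), uniq s ->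
          \sum_(la <- s) c la *: p la = 0 -> forall la, la \in s -> c la = 0)].

Definition known_facts : Prop :=
  [/\ (forall la eta, eta \in Lam1 -> shiftm la eta = None -> f_tau eta (ptC la) = 0),
      (forall q, W_invariant q -> forall k, (msize q <= k)%N ->
          iter k adL (mop q) = fun _ _ => 0) &
      (forall q, W_invariant q -> forall la,
          Dop q (pfun la) = fun mu => q.@[ptC la] * pfun la mu)].

End Setting.

From HB Require Import structures.
From mathcomp Require Import all_boot all_order all_algebra.
From mathcomp Require Import mpoly.
From Stdlib Require Import FunctionalExtensionality.
Set Implicit Arguments.
Unset Strict Implicit.
Unset Printing Implicit Defensive.
Import GRing.Theory Num.Theory.
Local Open Scope ring_scope.

(* Write the transform as hat = P S, where S multiplies by (-1)^ell and
   P h (mu) = sum_tau p_tau(rho + mu) h(tau), so that P delta_tau = p_tau.  All operators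
   involved are triangular with respect to the level ell: (X h)(mu) only involves h on levels
   <= ell(mu), so they are determined by their values on the indicators delta_tau.
   For the invariant polynomial q = ell - ell(rho), m_q is multiplication M by the level;
   since L lowers the level by exactly one, ad L (M) = -L, ad L (L) = 0 and D_q = M - L.
   As D_q p_tau = ell(tau) p_tau, this gives (M - L) P = P M, and since an eigenfunction of
   M - L is determined by its values on the eigenvalue's level, also L P = P L.  Together
   with S L = -L S these show that (PS)^2 commutes with M, hence is diagonal, and the
   diagonal is computed directly: (PS)^2 = 1.  So hat is an involutive algebra automorphism
   of all operators, hat L = P S L P S = -L, and hat m_q = D_q because D_q hat and hat m_q
   both send delta_tau to (-1)^ell(tau) q(rho + tau) p_tau. *)

Lemma sum_ord_vanish (V : nmodType) m N (F : nat -> V) :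
  (m <= N)%N -> (forall k, (m <= k)%N -> F k = 0) ->
  \sum_(k < N) F k = \sum_(k < m) F k.
Proof.
move=> le_mN F0; rewrite (big_ord_widen _ F le_mN) [RHS]big_mkcond /=.
by apply: eq_bigr => k _; case: ltnP => // /F0.
Qed.

Section PositiveLevels.

Variables (n : nat) (l : 'I_n -> nat).
Hypothesis l_gt0 : forall i, (0 < l i)%N.

Local Notation lv := (lev l).

Section Triangular.

Context {R : comPzRingType}.
Local Notation fun_on := (Lam n -> R).

(* The enumeration of [hatf]; coordinates are bounded by the level since all [l i > 0]. *)
Definition lams_upto N : seq (Lam n) :=
  [seq la <- [seq [ffun i => nat_of_ord (t i)] | t : {ffun 'I_n -> 'I_N.+1} <- index_enum _]
   | (lv la <= N)%N].

Lemma lams_upto_uniq N : uniq (lams_upto N).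
Proof.
rewrite filter_uniq // map_inj_uniq ?index_enum_uniq // => t1 t2 /ffunP eq_t.
by apply/ffunP => i; apply: val_inj; have := eq_t i; rewrite !ffunE.
Qed.

Lemma coord_le_lev (la : Lam n) i : (la i <= lv la)%N.
Proof. by rewrite /lev (bigD1 i) //= (leq_trans _ (leq_addr _ _)) // leq_pmulr. Qed.

Lemma mem_lams_upto N la : (la \in lams_upto N) = (lv la <= N)%N.
Proof.
rewrite mem_filter; case: leqP => //= le_laN; apply/mapP.
exists [ffun i => inord (la i)]; first by rewrite mem_index_enum.
by apply/ffunP => i; rewrite !ffunE inordK // ltnS (leq_trans (coord_le_lev la i)).
Qed.

Lemma sum_lams_upto_narrow M N (F : Lam n -> R) :
  (M <= N)%N -> (forall la, (M < lv la)%N -> F la = 0) ->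
  \sum_(la <- lams_upto N) F la = \sum_(la <- lams_upto M) F la.
Proof.
move=> le_MN F0; rewrite (bigID (fun la => (lv la <= M)%N)) /=.
rewrite [X in _ + X]big1 ?addr0 => [|la]; last by rewrite -ltnNge; apply: F0.
rewrite -big_filter; apply/perm_big/uniq_perm;
  [exact/filter_uniq/lams_upto_uniq | exact: lams_upto_uniq |].
move=> la; rewrite mem_filter !mem_lams_upto.
by case: leqP => //= le_laM; rewrite (leq_trans le_laM).
Qed.

Definition delta (t : Lam n) : fun_on := fun mu => (mu == t)%:R.

Lemma sum_delta N (g : fun_on) mu : (lv mu <= N)%N ->
  \sum_(t <- lams_upto N) g t * delta t mu = g mu.
Proof.
move=> le_muN; rewrite (bigD1_seq mu) ?mem_lams_upto ?lams_upto_uniq //=.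
rewrite /delta eqxx mulr1 big1 ?addr0 // => t /negPf.
by rewrite eq_sym => ->; rewrite mulr0.
Qed.

Definition triangular (X : fun_on -> fun_on) : Prop :=
  forall g mu, X g mu = \sum_(t <- lams_upto (lv mu)) g t * X (delta t) mu.

Lemma triangular_ext X Y : triangular X -> triangular Y ->
  (forall t, X (delta t) = Y (delta t)) -> X =1 Y.
Proof.
move=> tX tY eq_XY g; apply: functional_extensionality => mu.
by rewrite tX tY; apply: eq_bigr => t _; rewrite eq_XY.
Qed.

Lemma triangular_delta_lt X s t : triangular X -> (lv t < lv s)%N -> X (delta s) t = 0.
Proof.
move=> tX lt_ts; rewrite tX big1_seq // => u /andP[_]; rewrite mem_lams_upto /delta.
by case: eqP => [->|_]; [rewrite leqNgt lt_ts | rewrite mul0r].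
Qed.

Lemma triangularZ X : triangular X ->
  forall c g, X (fun x => c * g x) = (fun mu => c * X g mu).
Proof.
move=> tX c g; apply: functional_extensionality => mu.
by rewrite tX [in RHS]tX mulr_sumr; apply: eq_bigr => t _; rewrite mulrA.
Qed.

Lemma triangularN X : triangular X -> forall g, X (fun x => - g x) = (fun mu => - X g mu).
Proof.
move=> tX g; apply: functional_extensionality => mu.
by rewrite tX [in RHS]tX -sumrN; apply: eq_bigr => t _; rewrite mulNr.
Qed.

Lemma triangularD X : triangular X ->
  forall g1 g2, X (fun x => g1 x + g2 x) = (fun mu => X g1 mu + X g2 mu).
Proof.
move=> tX g1 g2; apply: functional_extensionality => mu.
by rewrite tX [X g1 _]tX [X g2 _]tX -big_split; apply: eq_bigr => t _; rewrite mulrDl.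
Qed.

Lemma triangularB X : triangular X ->
  forall g1 g2, X (fun x => g1 x - g2 x) = (fun mu => X g1 mu - X g2 mu).
Proof. by move=> tX g1 g2; rewrite triangularD // triangularN. Qed.

Lemma triangular_id : triangular id.
Proof. by move=> g mu; rewrite sum_delta. Qed.

Lemma triangular_mulf (a : fun_on) : triangular (fun g mu => a mu * g mu).
Proof.
move=> g mu; rewrite -[in LHS](@sum_delta (lv mu) g mu) // mulr_sumr.
by apply: eq_bigr => t _; rewrite mulrCA.
Qed.

Lemma triangular_comp X Y : triangular X -> triangular Y -> triangular (X \o Y).
Proof.
move=> tX tY g mu /=; rewrite tX.
transitivity (\sum_(t <- lams_upto (lv mu)) \sum_(s <- lams_upto (lv mu))
                g s * Y (delta s) t * X (delta t) mu).
  rewrite [LHS]big_seq [RHS]big_seq; apply: eq_bigr => t.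
  rewrite mem_lams_upto => le_tmu; rewrite tY mulr_suml.
  rewrite -(sum_lams_upto_narrow le_tmu) // => s lt_ts.
  by rewrite (triangular_delta_lt tY lt_ts) mulr0 mul0r.
rewrite exchange_big /=; apply: eq_bigr => s _; rewrite tX mulr_sumr.
by apply: eq_bigr => t _; rewrite mulrA.
Qed.

Lemma triangular_sub X Y : triangular X -> triangular Y ->
  triangular (fun g mu => X g mu - Y g mu).
Proof.
by move=> tX tY g mu; rewrite tX tY -sumrB; apply: eq_bigr => t _; rewrite mulrBr.
Qed.

Lemma triangular_sum m (c : nat -> R) (X : nat -> fun_on -> fun_on) :
  (forall k, triangular (X k)) -> triangular (fun g mu => \sum_(k < m) c k * X k g mu).
Proof.
move=> tX g mu.
under eq_bigr do rewrite tX mulr_sumr.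
rewrite exchange_big /=; apply: eq_bigr => t _; rewrite mulr_sumr.
by apply: eq_bigr => k _; rewrite mulrCA.
Qed.

Lemma mulf_delta (a : fun_on) t : (fun mu => a mu * delta t mu) = (fun mu => a t * delta t mu).
Proof.
by apply: functional_extensionality => mu; rewrite /delta; case: eqP => [->|]; rewrite ?mulr0.
Qed.

Definition sgn (g : fun_on) : fun_on := fun mu => (-1) ^+ lv mu * g mu.

Lemma triangular_sgn : triangular sgn.
Proof. exact: triangular_mulf. Qed.

Lemma sgn_delta t : sgn (delta t) = (fun mu => (-1) ^+ lv t * delta t mu).
Proof. exact: mulf_delta. Qed.

Definition mlev (g : fun_on) : fun_on := fun mu => (lv mu)%:R * g mu.

Lemma triangular_mlev : triangular mlev.
Proof. exact: triangular_mulf. Qed.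

Lemma mlev_delta t : mlev (delta t) = (fun mu => (lv t)%:R * delta t mu).
Proof. exact: mulf_delta. Qed.

Lemma sgn_mlev g : sgn (mlev g) = mlev (sgn g).
Proof. by apply: functional_extensionality => mu; rewrite /sgn /mlev mulrCA. Qed.

End Triangular.

Section LevelLowering.

Variables (C : numClosedFieldType) (ws : seq 'M[int]_n).
Variables (Delta : seq 'cV[int]_n) (rho : 'I_n -> C).
Hypothesis ell_inv : ell_invariant ws l.
Local Notation L := (Lop ws l Delta rho).
Local Notation AD := (adL ws l Delta rho).
Local Notation inAlg := (inA ws l Delta rho).
Hypothesis iter_adL_msize :
  forall q, W_invariant ws q -> forall k, (msize q <= k)%N ->
  iter k AD (mop rho q) = (fun _ _ => 0).

Lemma lev_int (la : Lam n) : (lv la : int) = \sum_j (la j : int) * (l j : int).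
Proof.
by rewrite /lev (big_morph Posz PoszD (erefl _)); apply: eq_bigr => j _; rewrite PoszM.
Qed.

Lemma ell_Lam1 eta : eta \in Lam1 ws l -> \sum_j eta 0 j * (l j : int) = 1.
Proof.
rewrite /Lam1 mem_undup => /allpairsP [[w i] /= [w_ws]].
rewrite mem_filter => /andP[/eqP l_i _] ->.
have /matrixP/(_ i 0) := ell_inv w_ws; rewrite !mxE => ell_i.
rewrite (_ : 1 = (l i)%:Z); last by rewrite l_i.
by rewrite -ell_i; apply: eq_bigr => j _; rewrite !mxE.
Qed.

Lemma lev_shiftm la eta mu : eta \in Lam1 ws l -> shiftm la eta = Some mu ->
  (lv mu).+1 = lv la.
Proof.
move=> eta_Lam1; rewrite /shiftm; case: ifP => // /forallP la_ge [<-].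
apply/eqP; rewrite -eqz_nat -addn1 PoszD -[Posz 1]/(1 : int) !lev_int.
rewrite -(ell_Lam1 eta_Lam1) -big_split /=.
apply/eqP/eq_bigr => j _; rewrite ffunE gez0_abs ?la_ge //.
by rewrite -mulrDl subrK.
Qed.

Lemma eq_Lop (g g' : fn C n) la : (forall mu, (lv mu).+1 = lv la -> g mu = g' mu) ->
  L g la = L g' la.
Proof.
move=> eq_g; apply: eq_big_seq => eta eta_Lam1.
by case E: (shiftm la eta) => [mu|] //; rewrite eq_g // (lev_shiftm eta_Lam1 E).
Qed.

Lemma Lop0 la : L (fun _ => 0) la = 0.
Proof. by rewrite /Lop big1 // => eta _; case: shiftm => *; rewrite mulr0. Qed.

Lemma triangular_Lop : triangular L.
Proof.
move=> g la; rewrite /Lop.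
under [RHS]eq_bigr do rewrite mulr_sumr.
rewrite exchange_big /= big_seq [RHS]big_seq; apply: eq_bigr => eta eta_Lam1.
case E: (shiftm la eta) => [mu|]; last by rewrite mulr0 big1 // => t _; rewrite !mulr0.
rewrite -[in LHS](@sum_delta _ (lv la) g mu); last by rewrite -(lev_shiftm eta_Lam1 E).
by rewrite mulr_sumr; apply: eq_bigr => t _; rewrite mulrCA.
Qed.

Lemma mlev_Lop g la : mlev (L g) la = L g la + L (mlev g) la.
Proof.
rewrite /mlev /Lop mulr_sumr -big_split /=; apply: eq_big_seq => eta eta_Lam1.
case E: (shiftm la eta) => [mu|]; last by rewrite !mulr0 addr0.
by rewrite -(lev_shiftm eta_Lam1 E) -addn1 natrD mulrDl mul1r addrC mulrCA.
Qed.

Lemma sgn_Lop g : sgn (L g) = (fun la => - L (sgn g) la).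
Proof.
apply: functional_extensionality => la; rewrite /sgn /Lop mulr_sumr -sumrN.
apply: eq_big_seq => eta eta_Lam1; case E: (shiftm la eta) => [mu|]; last first.
  by rewrite !mulr0 oppr0.
by rewrite -(lev_shiftm eta_Lam1 E) exprS mulN1r mulNr mulrCA.
Qed.

Definition ell_poly : {mpoly C[n]} :=
  \sum_i (l i)%:R *: 'X_i - (\sum_i (l i)%:R * rho i)%:MP.

Lemma ell_polyE z : ell_poly.@[z] = \sum_i (l i)%:R * z i - \sum_i (l i)%:R * rho i.
Proof.
rewrite mevalB mevalC (big_morph (meval z) (@mevalD _ _ z) (meval0 z)).
by congr (_ - _); apply: eq_bigr => i _; rewrite mevalZ mevalXU.
Qed.

Lemma ell_poly_pt mu : ell_poly.@[ptC rho mu] = (lv mu)%:R.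
Proof.
rewrite ell_polyE /ptC; under eq_bigr do rewrite mulrDr.
rewrite big_split /= addrAC subrr add0r /lev natr_sum.
by apply: eq_bigr => i _; rewrite natrM mulrC.
Qed.

Lemma ell_poly_invariant : W_invariant ws ell_poly.
Proof.
move=> w w_ws z; rewrite !ell_polyE; congr (_ - _).
under [RHS]eq_bigr do rewrite mulr_sumr.
rewrite [RHS]exchange_big /=; apply: eq_bigr => i _.
have /matrixP/(_ i 0) := ell_inv w_ws; rewrite !mxE => ell_i.
transitivity (((l i)%:Z)%:~R * z i : C); first by [].
rewrite -ell_i.
rewrite (big_morph (fun x : int => x%:~R : C) (@intrD _) (erefl _)) mulr_suml.
by apply: eq_bigr => j _; rewrite mxE intrM mulrAC mulrC [_ * z i]mulrC.
Qed.

Lemma mop_ell_poly : mop rho ell_poly = mlev.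
Proof.
apply: functional_extensionality => g; apply: functional_extensionality => mu.
by rewrite /mop ell_poly_pt.
Qed.

Lemma adL_mlev : AD mlev = (fun g la => - L g la).
Proof.
apply: functional_extensionality => g; apply: functional_extensionality => la.
by rewrite /adL mlev_Lop opprD addrCA subrr addr0.
Qed.

Lemma adL_oppLop : AD (fun g la => - L g la) = (fun _ _ => 0).
Proof.
apply: functional_extensionality => g; apply: functional_extensionality => la.
by rewrite /adL (triangularN triangular_Lop) opprK addNr.
Qed.

Lemma iter_adL_mlev k : iter k.+2 AD mlev = (fun _ _ => 0).
Proof.
elim: k => [|k IH]; first by rewrite /= adL_mlev adL_oppLop.
rewrite iterS IH; apply: functional_extensionality => g; apply: functional_extensionality => la.
by rewrite /adL Lop0 subrr.
Qed.

Lemma triangular_iter_adL X k : triangular X -> triangular (iter k AD X).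
Proof.
move=> tX; elim: k => [//|k IH]; rewrite iterS.
exact: triangular_sub (triangular_comp triangular_Lop IH) (triangular_comp IH triangular_Lop).
Qed.

Lemma triangular_mop q : triangular (mop rho q).
Proof. exact: (triangular_mulf (fun mu => q.@[ptC rho mu])). Qed.

Lemma triangular_Dop q : triangular (Dop ws l Delta rho q).
Proof.
have tAD k : triangular (iter k AD (mop rho q)) by exact/triangular_iter_adL/triangular_mop.
by move=> g mu; rewrite /Dop (triangular_sum _ (fun k => (k`!%:R)^-1) tAD).
Qed.
Lemma Dop_truncate q K g la : W_invariant ws q -> (msize q <= K)%N ->
  Dop ws l Delta rho q g la =
  \sum_(k < K) (k`!%:R)^-1 * iter k AD (mop rho q) g la.
Proof.
move=> qW le_qK.
have vanish k : (msize q <= k)%N -> (k`!%:R)^-1 * iter k AD (mop rho q) g la = 0.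
  by move/(iter_adL_msize qW) ->; rewrite mulr0.
by rewrite /Dop (sum_ord_vanish _ vanish) // [RHS](sum_ord_vanish le_qK vanish).
Qed.

Definition Dlev (g : fn C n) : fn C n := fun mu => mlev g mu - L g mu.

Lemma triangular_Dlev : triangular Dlev.
Proof. exact: triangular_sub triangular_mlev triangular_Lop. Qed.

Lemma Dlev_Lop g la : Dlev (L g) la = L g la + L (Dlev g) la.
Proof. by rewrite /Dlev mlev_Lop (triangularB triangular_Lop) addrA. Qed.

Lemma sgn_Dlev g : sgn (Dlev g) = (fun mu => mlev (sgn g) mu + L (sgn g) mu).
Proof.
apply: functional_extensionality => mu.
have /(congr1 (fun F => F mu)) := sgn_Lop g; rewrite /sgn /Dlev /mlev /= => sgnL.
by rewrite mulrBr sgnL opprK mulrCA.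
Qed.

Lemma Lop_delta_low t mu : (lv mu <= lv t)%N -> L (delta t) mu = 0.
Proof.
move=> le_mut; rewrite (@eq_Lop _ (fun _ => 0)) ?Lop0 // => nu lev_nu.
by rewrite /delta; case: eqP le_mut => // <-; rewrite -lev_nu ltnn.
Qed.

Lemma Dop_ell_poly g la : Dop ws l Delta rho ell_poly g la = Dlev g la.
Proof.
rewrite (Dop_truncate g la ell_poly_invariant (leqW (leqnSn _))) mop_ell_poly.
rewrite !big_ord_recl big1 => [|k _]; last by rewrite !lift0 iter_adL_mlev mulr0.
by rewrite /= adL_mlev fact0 invr1 !mul1r addr0.
Qed.

Lemma inA_sum m (c : nat -> C) (X : nat -> op C n) : (forall k, inAlg (X k)) ->
  inAlg (fun g mu => \sum_(k < m) c k * X k g mu).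
Proof.
move=> AX; elim: m => [|m IH].
  have -> : (fun g mu => \sum_(k < 0) c k * X k g mu) = (fun g mu => 0 * g mu) :> op C n.
    apply: functional_extensionality => g; apply: functional_extensionality => mu.
    by rewrite big_ord0 mul0r.
  exact/inA_scale/inA_id.
have -> : (fun g mu => \sum_(k < m.+1) c k * X k g mu) =
    (fun g mu => \sum_(k < m) c k * X k g mu + c m * X m g mu) :> op C n.
  apply: functional_extensionality => g; apply: functional_extensionality => mu.
  by rewrite big_ord_recr.
exact: inA_add IH (inA_scale _ (AX m)).
Qed.

Lemma inA_iter_adL X k : inAlg X -> inAlg (iter k AD X).
Proof.
move=> AX; elim: k => [//|k IH]; rewrite iterS.
have -> : AD (iter k AD X) =
    (fun g la => (L \o iter k AD X) g la + -1 * (iter k AD X \o L) g la).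
  apply: functional_extensionality => g; apply: functional_extensionality => la.
  by rewrite /adL mulN1r.
exact: inA_add (inA_comp (inA_L _ _ _ _) IH) (inA_scale _ (inA_comp IH (inA_L _ _ _ _))).
Qed.

Lemma inA_Dop q : W_invariant ws q -> inAlg (Dop ws l Delta rho q).
Proof.
move=> qW; apply: (@inA_sum _ (fun k => (k`!%:R)^-1) (fun k => iter k AD (mop rho q))).
by move=> k; apply/inA_iter_adL/inA_m.
Qed.

Section Interpolation.

Variable p : Lam n -> {mpoly C[n]}.
Hypothesis pfun_low : forall t mu, (lv mu <= lv t)%N -> pfun rho p t mu = (t == mu)%:R.
Hypothesis Dop_pfun : forall q, W_invariant ws q -> forall t,
  Dop ws l Delta rho q (pfun rho p t) = (fun mu => q.@[ptC rho t] * pfun rho p t mu).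

Local Notation pf := (pfun rho p).
Local Notation hat := (hatf l rho p).

Definition interp (g : fn C n) : fn C n :=
  fun mu => \sum_(t <- lams_upto (lv mu)) pf t mu * g t.

Lemma pfun_lt t mu : (lv mu < lv t)%N -> pf t mu = 0.
Proof.
move=> lt_mut; rewrite pfun_low ?(ltnW lt_mut) //.
by case: eqP lt_mut => // ->; rewrite ltnn.
Qed.

Lemma interp_delta t : interp (delta t) = pf t.
Proof.
apply: functional_extensionality => mu; rewrite /interp.
case: (leqP (lv t) (lv mu)) => [le_tmu | lt_mut].
  rewrite -[RHS](@sum_delta _ (lv mu) (fun x => pf x mu) t le_tmu).
  by apply: eq_bigr => x _; rewrite /delta eq_sym.
rewrite pfun_lt // big1_seq // => x /andP[_]; rewrite mem_lams_upto /delta.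
by case: eqP => [-> | _]; [rewrite leqNgt lt_mut | rewrite mulr0].
Qed.

Lemma triangular_interp : triangular interp.
Proof.
by move=> g mu; rewrite {1}/interp; apply: eq_bigr => x _; rewrite interp_delta mulrC.
Qed.

Lemma interp_diag g mu : (forall x, (lv x < lv mu)%N -> g x = 0) -> interp g mu = g mu.
Proof.
move=> g0; rewrite /interp -[RHS](@sum_delta _ (lv mu) g mu) //.
apply: eq_big_seq => x _; case: (ltnP (lv x) (lv mu)) => [/g0 -> | le_mux].
  by rewrite mulr0 mul0r.
by rewrite pfun_low // mulrC /delta eq_sym.
Qed.

Lemma hatfE : hat = interp \o sgn.
Proof.
apply: functional_extensionality => g; apply: functional_extensionality => mu.
rewrite /hatf /interp /lams_upto /= big_filter big_map.
by apply: eq_bigr => t _; rewrite /sgn mulrCA mulrA.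
Qed.

Lemma triangular_hatf : triangular hat.
Proof. by rewrite hatfE; apply: triangular_comp triangular_interp triangular_sgn. Qed.

Lemma hatf_delta t : hat (delta t) = (fun mu => (-1) ^+ lv t * pf t mu).
Proof. by rewrite hatfE /= sgn_delta (triangularZ triangular_interp) interp_delta. Qed.

Lemma Dlev_pfun t : Dlev (pf t) = (fun mu => (lv t)%:R * pf t mu).
Proof.
rewrite -(ell_poly_pt t) -Dop_pfun; last exact: ell_poly_invariant.
by apply: functional_extensionality => mu; rewrite Dop_ell_poly.
Qed.

Lemma Dlev_interp g : Dlev (interp g) = interp (mlev g).
Proof.
apply: (triangular_ext (X := Dlev \o interp) (Y := interp \o mlev)).
- exact: triangular_comp triangular_Dlev triangular_interp.
- exact: triangular_comp triangular_interp triangular_mlev.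
by move=> t /=; rewrite mlev_delta (triangularZ triangular_interp) interp_delta Dlev_pfun.
Qed.

Lemma Dlev_eigen_unique (x y : fn C n) k :
  (forall mu, Dlev x mu = k%:R * x mu) -> (forall mu, Dlev y mu = k%:R * y mu) ->
  (forall mu, lv mu = k -> x mu = y mu) -> x = y.
Proof.
move=> Dx Dy eq_k; apply: functional_extensionality => mu.
(* Off level [k], [(lv mu - k) z mu = L z mu] and [L] only reads the level below. *)
elim: {mu}(lv mu).+1 {-2}mu (ltnSn (lv mu)) => [//|N IH] mu lt_muN.
have [/eq_k //|ne_k] := eqVneq (lv mu) k.
have eq_L : L x mu = L y mu.
  by apply: eq_Lop => nu lev_nu; apply: IH; rewrite lev_nu.
have Dlev_diag z : Dlev z mu = k%:R * z mu -> ((lv mu)%:R - k%:R) * z mu = L z mu.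
  by rewrite /Dlev /mlev => /eqP; rewrite subr_eq addrC -subr_eq -mulrBl => /eqP.
apply: (mulfI (_ : (lv mu)%:R - k%:R != 0 :> C)); first by rewrite subr_eq0 eqr_nat.
by rewrite !Dlev_diag.
Qed.

Lemma Lop_interp g : L (interp g) = interp (L g).
Proof.
apply: (triangular_ext (X := L \o interp) (Y := interp \o L)).
- exact: triangular_comp triangular_Lop triangular_interp.
- exact: triangular_comp triangular_interp triangular_Lop.
move=> t /=; rewrite interp_delta.
have mlev_Ldelta : mlev (L (delta t)) = (fun mu => (lv t).+1%:R * L (delta t) mu).
  apply: functional_extensionality => mu.
  by rewrite mlev_Lop mlev_delta (triangularZ triangular_Lop) -addn1 natrD mulrDl mul1r addrC.
apply: (@Dlev_eigen_unique _ _ (lv t).+1) => mu.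
- rewrite Dlev_Lop Dlev_pfun (triangularZ triangular_Lop).
  by rewrite -addn1 natrD mulrDl mul1r addrC.
- by rewrite Dlev_interp mlev_Ldelta (triangularZ triangular_interp).
move=> lev_mu; rewrite interp_diag => [|x]; last first.
  by rewrite lev_mu ltnS; apply: Lop_delta_low.
apply: eq_Lop => nu; rewrite lev_mu => -[lev_nu].
by rewrite pfun_low ?lev_nu // /delta eq_sym.
Qed.

Lemma hatf_mlev g : hat (hat (mlev g)) = mlev (hat (hat g)).
Proof.
rewrite hatfE /= sgn_mlev -Dlev_interp sgn_Dlev (triangularD triangular_interp).
apply: functional_extensionality => mu.
by rewrite -Lop_interp -Dlev_interp /Dlev subrK.
Qed.

Lemma hatfK g : hat (hat g) = g.
Proof.
apply: (triangular_ext (X := hat \o hat) (Y := id)) => [||t].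
- exact: triangular_comp triangular_hatf triangular_hatf.
- exact: triangular_id.
apply: functional_extensionality => mu /=.
have [lev_mu | ne_lev] := eqVneq (lv mu) (lv t).
  rewrite hatf_delta (triangularZ triangular_hatf) hatfE /= interp_diag => [|x lt_x].
    rewrite /sgn lev_mu pfun_low ?lev_mu // mulrA -exprMn mulrNN mul1r expr1n mul1r.
    by rewrite /delta eq_sym.
  by rewrite /sgn pfun_lt ?mulr0 // -lev_mu.
have /(congr1 (fun F => F mu)) := hatf_mlev (delta t).
rewrite mlev_delta !(triangularZ triangular_hatf) /= /mlev => lev_comm.
have /eqP : ((lv mu)%:R - (lv t)%:R) * hat (hat (delta t)) mu = 0.
  by rewrite mulrBl lev_comm subrr.
rewrite mulf_eq0 subr_eq0 eqr_nat (negPf ne_lev) /= => /eqP ->.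
by rewrite /delta; case: eqP => // eq_mut; rewrite eq_mut eqxx in ne_lev.
Qed.

Local Notation hat_op := (hatop l rho p).

Lemma hatop_mop q : W_invariant ws q -> hat_op (mop rho q) = Dop ws l Delta rho q.
Proof.
move=> qW.
have Dop_hatf g : Dop ws l Delta rho q (hat g) = hat (mop rho q g).
  apply: (triangular_ext (X := Dop ws l Delta rho q \o hat) (Y := hat \o mop rho q)).
  - exact: triangular_comp (triangular_Dop q) triangular_hatf.
  - exact: triangular_comp triangular_hatf (triangular_mop q).
  move=> t /=; rewrite hatf_delta (triangularZ (triangular_Dop q)) Dop_pfun //.
  rewrite /mop (mulf_delta (fun mu => q.@[ptC rho mu])) (triangularZ triangular_hatf).
  by rewrite hatf_delta; apply: functional_extensionality => mu; rewrite mulrCA.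
by apply: functional_extensionality => h; rewrite /hatop -Dop_hatf hatfK.
Qed.

Lemma hatop_Lop : hat_op L = (fun h la => - L h la).
Proof.
apply: functional_extensionality => h; rewrite /hatop.
rewrite {1}hatfE /= sgn_Lop (triangularN triangular_interp) -Lop_interp.
by have := hatfK h; rewrite hatfE /= => ->.
Qed.

Lemma hatopK (X : op C n) : hat_op (hat_op X) = X.
Proof. by apply: functional_extensionality => h; rewrite /hatop !hatfK. Qed.

Lemma hatop_comp (X Y : op C n) : hat_op (X \o Y) = hat_op X \o hat_op Y.
Proof. by apply: functional_extensionality => h; rewrite /hatop /= hatfK. Qed.

Lemma hatop_add (X Y : op C n) :
  hat_op (fun h la => X h la + Y h la) = (fun h la => hat_op X h la + hat_op Y h la).
Proof.
by apply: functional_extensionality => h; rewrite /hatop (triangularD triangular_hatf).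
Qed.

Lemma hatop_scale c (X : op C n) :
  hat_op (fun h la => c * X h la) = (fun h la => c * hat_op X h la).
Proof.
by apply: functional_extensionality => h; rewrite /hatop (triangularZ triangular_hatf).
Qed.

Lemma hatop_id : hat_op id = id.
Proof. by apply: functional_extensionality => h; rewrite /hatop hatfK. Qed.

Lemma inA_hatop X : inAlg X -> inAlg (hat_op X).
Proof.
elim=> [q qW | | | X1 Y1 _ AX1 _ AY1 | c X1 _ AX1 | X1 Y1 _ AX1 _ AY1].
- by rewrite hatop_mop //; apply: inA_Dop.
- rewrite hatop_Lop.
  have -> : (fun h la => - L h la) = (fun h la => -1 * L h la) :> op C n.
    apply: functional_extensionality => h; apply: functional_extensionality => la.
    by rewrite mulN1r.
  exact/inA_scale/inA_L.
- by rewrite hatop_id; apply: inA_id.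
- by rewrite hatop_add; apply: inA_add.
- by rewrite hatop_scale; apply: inA_scale.
- by rewrite hatop_comp; apply: inA_comp.
Qed.

End Interpolation.

End LevelLowering.

End PositiveLevels.

Theorem theorem5p3 (C : numClosedFieldType) (n : nat) (ws : seq 'M[int]_n)
  (l : 'I_n -> nat) (Delta : seq 'cV[int]_n) (rho : 'I_n -> C)
  (p : Lam n -> {mpoly C[n]}) :
  knop_setting C ws l Delta ->
  in_V0 ws rho ->
  nonintegral Delta rho ->
  interpolation_basis ws l rho p ->
  known_facts ws l Delta rho p ->
  [/\ (forall q, W_invariant ws q -> hatop l rho p (mop rho q) = Dop ws l Delta rho q),
      hatop l rho p (Lop ws l Delta rho) = (fun h la => - Lop ws l Delta rho h la),
      (forall X, inA ws l Delta rho X ->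
          inA ws l Delta rho (hatop l rho p X) /\ hatop l rho p (hatop l rho p X) = X),
      (forall X Y, inA ws l Delta rho X -> inA ws l Delta rho Y ->
          [/\ hatop l rho p (fun h => X (Y h)) = (fun h => hatop l rho p X (hatop l rho p Y h)),
              hatop l rho p (fun h la => X h la + Y h la)
                = (fun h la => hatop l rho p X h la + hatop l rho p Y h la) &
              forall c : C, hatop l rho p (fun h la => c * X h la)
                = (fun h la => c * hatop l rho p X h la)]) &
      hatop l rho p (fun h => h) = (fun h => h)].
Proof.
(* [in_V0] and [nonintegral] only enter through the facts packaged in
   [interpolation_basis] and [known_facts]. *)
case=> _ ell_inv _ l_gt0 _ _ [pfun_basis _ _ _] [_ iter_adL_msize Dop_pfun].
have pfun_low t mu : (lev l mu <= lev l t)%N -> pfun rho p t mu = (t == mu)%:R.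
  by case: (pfun_basis t) => _ [_]; apply.
split.
- exact: (hatop_mop l_gt0 ell_inv iter_adL_msize pfun_low Dop_pfun).
- exact: (hatop_Lop l_gt0 ell_inv iter_adL_msize pfun_low Dop_pfun).
- move=> X AX; split; first exact: (inA_hatop l_gt0 ell_inv iter_adL_msize pfun_low Dop_pfun).
  exact: (hatopK l_gt0 ell_inv iter_adL_msize pfun_low Dop_pfun).
- move=> X Y _ _; split.
  + exact: (hatop_comp l_gt0 ell_inv iter_adL_msize pfun_low Dop_pfun).
  + exact: (hatop_add l_gt0 pfun_low).
  + move=> c; exact: (hatop_scale l_gt0 pfun_low).
- exact: (hatop_id l_gt0 ell_inv iter_adL_msize pfun_low Dop_pfun).
Qed.
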